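(* For the boundary Markov chain $(M_n)$ started from any fixed initial state, almost surely \[ \limsup_{n\to\infty} \frac{M_n}{n^{2/3}\log n} < \infty . \]
   Context: The boundary Markov chain is the Markov chain $(M_n)_{n\ge0}$ on $\{0,1,2,\dots\}$ with $M_{n+1}=M_n+X_n$. Given $M_n=m$, its step $X_n$ has the law \[ \mathbb P(X_n=1\mid M_n=m)=\frac{2m+3}{3m+3}. \] For $1\le k\le m$, \[ \mathbb P(X_n=-k\mid M_n=m)=\frac{2(2k-2)!}{(k-1)!(k+1)!}\cdot\frac{m!^2(2m-2k+1)!}{(m-k)!^2(2m+1)!}. \] *)

From HB Require Import structures.
From mathcomp Require Import all_boot all_order all_algebra.
From mathcomp Require Import all_classical all_reals all_analysis.
Set Implicit Arguments. Unset Strict Implicit. Unset Printing Implicit Defensive.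
Import Order.TTheory GRing.Theory Num.Theory.
Local Open Scope ring_scope.
Local Open Scope classical_set_scope.

Definition bdry_step_down {R : realType} (m k : nat) : R :=
  (2 * ((2 * k - 2)`!)%:R / (((k - 1)`!)%:R * ((k + 1)`!)%:R)) *
  ((m`!)%:R ^+ 2 * ((2 * m - 2 * k + 1)`!)%:R /
   (((m - k)`!)%:R ^+ 2 * ((2 * m + 1)`!)%:R)).

Definition bdry_kernel {R : realType} (m m' : nat) : R :=
  if m' == m.+1 then (2 * m + 3)%:R / (3 * m + 3)%:R
  else if (m' < m)%N then bdry_step_down m (m - m')
  else 0.

Definition is_boundary_chain {R : realType} {d : measure_display}
    {T : measurableType d} (P : probability T R) (M : nat -> T -> nat)
    (m0 : nat) : Prop :=
  (forall n x, measurable [set w | M n w = x]) /\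
  (forall (n : nat) (x : nat -> nat),
     P [set w | forall i, (i <= n)%N -> M i w = x i] =
     ((x 0%N == m0)%:R * \prod_(i < n) bdry_kernel (x i) (x i.+1))%:E).

Definition bdry_ratio {R : realType} {T : Type} (M : nat -> T -> nat) (w : T)
    (n : nat) : \bar R :=
  (((M n w)%:R : R) / ((n%:R : R) `^ (2 / 3) * ln (n%:R : R)))%:E.

From HB Require Import structures.
From mathcomp Require Import all_boot all_order all_algebra.
From mathcomp Require Import all_classical all_reals all_analysis.
From mathcomp Require Import ring lra zify.
Import Order.TTheory GRing.Theory Num.Theory.
Local Open Scope ring_scope.
Local Open Scope classical_set_scope.

(* The down-jump probabilities factor as [p(m, y) = a(m - y) e(y) / e(m)] with
   [e(n) = (2n + 1) C(2n, n) / 4^n] ([jump_rate] and [doob_weight] below), so the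
   moments of the jumps telescope and [h(n) = 3/4 n (n + 1) / e(n)] ([potential])
   satisfies [K h = h + 1]: [h(M_n) - n] is a martingale.  Optional stopping bounds
   the probability of climbing from [m0] to level [L] within [N] steps by
   [(h(m0) + N) / h(L)], and [h(n) >= n^(3/2) / 2].  With [L = 4^j (j + 2) + m0 + 1]
   and [N = 8^j] these probabilities are [O(j^(-3/2))], so by Borel-Cantelli
   eventually [M_k < 4^(t+1) (t + 3) + m0 + 1] for [8^t <= k < 8^(t+1)], which is
   [O(k^(2/3) log k)]. *)

Section KernelAlgebra.
Variable R : realType.

Fixpoint midbinom (n : nat) : R :=
  if n is n'.+1 then midbinom n' * (2 * n' + 1)%:R / (2 * n' + 2)%:R else 1.

Lemma midbinomS n :
  midbinom n.+1 = midbinom n * (2 * n%:R + 1) / (2 * n%:R + 2).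
Proof.
have e1 : ((2 * n + 1)%:R : R) = 2 * n%:R + 1 by rewrite natrD natrM.
have e2 : ((2 * n + 2)%:R : R) = 2 * n%:R + 2 by rewrite natrD natrM.
by rewrite -e1 -e2.
Qed.

Lemma midbinom_gt0 n : 0 < midbinom n.
Proof.
elim: n => [|n IH]; first exact: ltr01.
by rewrite midbinomS divr_gt0 ?mulr_gt0 // ltr0n addn2.
Qed.

Lemma fact_double n : ((2 * n)`!)%:R = 4 ^+ n * midbinom n * (n`!)%:R ^+ 2 :> R.
Proof.
elim: n => [|n IH]; first by rewrite muln0 /= fact0 expr0 !mul1r expr1n.
rewrite mulnS !factS !natrM IH midbinomS.
rewrite -[(2*n).+2]addn2 -[(2*n).+1]addn1 -[n.+1]addn1 !natrD addn1 [4 ^+ n.+1]exprS.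
field; apply/negP=> /eqP; have := ler0n R n; lra.
Qed.

Lemma midbinom_sqr_le n : midbinom n ^+ 2 * (2 * n%:R + 1) <= 1.
Proof.
elim: n => [|n IH]; first by rewrite /= expr1n mul1r mulr0 add0r.
rewrite midbinomS -[n.+1]addn1 natrD.
have hn := ler0n R n; have hb := midbinom_gt0 n.
set b := midbinom n in IH hb *; set x := n%:R in IH hn *.
have -> : (b * (2 * x + 1) / (2 * x + 2)) ^+ 2 * (2 * (x + 1) + 1)
  = (b ^+ 2 * (2 * x + 1)) * ((2 * x + 1) * (2 * x + 3) / (2 * x + 2) ^+ 2).
  by field; apply/negP => /eqP; lra.
have hx : 0 < 2 * x + 2 by lra.
have q1 : (2 * x + 1) * (2 * x + 3) / (2 * x + 2) ^+ 2 <= 1.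
  by rewrite ler_pdivrMr ?exprn_gt0 // mul1r; nra.
by rewrite -[X in _ <= X](mul1r 1) ler_pM //
  ?mulr_ge0 ?divr_ge0 ?exprn_ge0 ?ltW ?invr_gt0 ?exprn_gt0 //; lra.
Qed.

Definition doob_weight (n : nat) : R := (2 * n%:R + 1) * midbinom n.
Definition jump_rate (k : nat) : R := midbinom k.-1 / (2 * k%:R * (k%:R + 1)).
Definition potential (n : nat) : R := 3 / 4 * (n%:R * (n%:R + 1)) / doob_weight n.

Lemma doob_weight_gt0 n : 0 < doob_weight n.
Proof. by rewrite mulr_gt0 ?midbinom_gt0 // ltr_wpDl ?mulr_ge0. Qed.

Lemma jump_rateS k : jump_rate k.+1 = midbinom k / (2 * (k%:R + 1) * (k%:R + 2)).
Proof. by rewrite /jump_rate /= -natr1; congr (_ / _); ring. Qed.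

Lemma jump_rate_gt0 k : (0 < k)%N -> 0 < jump_rate k.
Proof.
by case: k => // k _; rewrite jump_rateS divr_gt0 ?midbinom_gt0 // !mulr_gt0 // ltr_wpDl.
Qed.

Lemma potential_ge0 n : 0 <= potential n.
Proof. by rewrite divr_ge0 ?(ltW (doob_weight_gt0 n)) ?mulr_ge0 ?addr_ge0. Qed.

Lemma potential_gt0 n : (0 < n)%N -> 0 < potential n.
Proof.
by move=> n0; rewrite divr_gt0 ?doob_weight_gt0 // !mulr_gt0 ?ltr0n // ltr_wpDl.
Qed.

Lemma fact_neq0 n : (n`!)%:R != 0 :> R.
Proof. by rewrite pnatr_eq0 -lt0n fact_gt0. Qed.

Lemma bdry_step_down_doob y k :
  bdry_step_down (R:=R) (y + k.+1) k.+1 =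
  jump_rate k.+1 * doob_weight y / doob_weight (y + k.+1).
Proof.
rewrite /bdry_step_down jump_rateS /doob_weight.
have -> : (2 * k.+1 - 2 = 2 * k)%N by lia.
have -> : (k.+1 - 1 = k)%N by lia.
have -> : (k.+1 + 1 = k.+2)%N by lia.
have -> : (2 * (y + k.+1) - 2 * k.+1 + 1 = (2 * y).+1)%N by lia.
have -> : (y + k.+1 - k.+1 = y)%N by lia.
have -> : (2 * (y + k.+1) + 1 = (2 * (y + k.+1)).+1)%N by lia.
rewrite !factS !natrM !fact_double.
have f1 := fact_neq0 k; have f2 := fact_neq0 y; have f3 := fact_neq0 (y + k.+1).
have b1 := midbinom_gt0 k; have b2 := midbinom_gt0 y; have b3 := midbinom_gt0 (y + k.+1).
rewrite !exprD exprS [4 ^+ k.+1]exprS -!natr1 !natrD.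
have := ler0n R k; have := ler0n R y => hy hk.
field; repeat (apply/andP; split) => //; try exact: lt0r_neq0;
  try rewrite expf_neq0 //; apply/negP => /eqP; lra.
Qed.

Definition jump_mass m := \sum_(y < m) jump_rate (m - y).
Definition jump_moment1 m := \sum_(y < m) jump_rate (m - y) * y.+1%:R.
Definition jump_moment2 m := \sum_(y < m) jump_rate (m - y) * (y%:R * y.+1%:R).

Lemma jump_massE m : jump_mass m = 1 / 3 - midbinom m / (3 * (m%:R + 1)).
Proof.
elim: m => [|m IH]; first by rewrite /jump_mass big_ord0 /=; field.
rewrite /jump_mass big_ord_recl subn0.
under eq_bigr do rewrite lift0 subSS.
rewrite -/(jump_mass m) IH jump_rateS midbinomS.
have := ler0n R m => hm.
field; repeat (apply/andP; split) => //; apply/negP => /eqP; lra.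
Qed.

Lemma jump_moment1E m : jump_moment1 m =
  2 / 3 * ((2 * m%:R + 1) * midbinom m / (2 * m%:R + 2) + (m%:R - 1) / 2).
Proof.
elim: m => [|m IH]; first by rewrite /jump_moment1 big_ord0 /=; field.
rewrite /jump_moment1 big_ord_recl subn0.
under eq_bigr => i _ do rewrite lift0 subSS -natr1 mulrDr mulr1.
rewrite big_split /= -/(jump_moment1 m) -/(jump_mass m) IH jump_massE jump_rateS.
rewrite -[m.+1]addn1 natrD.
have := ler0n R m => hm.
field; repeat (apply/andP; split) => //; apply/negP => /eqP; lra.
Qed.

Lemma jump_moment2E m :
  jump_moment2 m = (4 * doob_weight m + (m%:R - 4) * (m%:R + 1)) / 3.
Proof.
elim: m => [|m IH]; first by rewrite /jump_moment2 /doob_weight big_ord0 /=; field.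
rewrite /jump_moment2 big_ord_recl subn0 mul0r mulr0 add0r.
have e i : (i.+1%:R * i.+2%:R : R) = i%:R * i.+1%:R + 2 * i.+1%:R.
  by rewrite -[i.+2]addn1 natrD; ring.
under eq_bigr => i _ do rewrite lift0 subSS e mulrDr [jump_rate _ * (2 * _)]mulrCA.
rewrite big_split /= -/(jump_moment2 m) IH -mulr_sumr -/(jump_moment1 m).
rewrite jump_moment1E /doob_weight midbinomS -[m.+1]addn1 natrD.
have := ler0n R m => hm.
field; repeat (apply/andP; split) => //; apply/negP => /eqP; lra.
Qed.

Lemma bdry_kernel_up m : bdry_kernel (R:=R) m m.+1 = (2 * m + 3)%:R / (3 * m + 3)%:R.
Proof. by rewrite /bdry_kernel eqxx. Qed.

Lemma bdry_kernel_down m y : (y < m)%N ->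
  bdry_kernel (R:=R) m y = jump_rate (m - y) * doob_weight y / doob_weight m.
Proof.
move=> ym; rewrite /bdry_kernel ym ifF; last by apply/eqP; lia.
have [k ->] : exists k, m = (y + k.+1)%N by exists (m - y - 1)%N; lia.
by rewrite (_ : y + k.+1 - y = k.+1)%N ?bdry_step_down_doob //; lia.
Qed.

Lemma bdry_kernel_out m y : y != m.+1 -> (m <= y)%N -> bdry_kernel (R:=R) m y = 0.
Proof. by move=> /negbTE ne my; rewrite /bdry_kernel ne ltnNge my. Qed.

Lemma bdry_kernel_ge0 m y : 0 <= bdry_kernel (R:=R) m y.
Proof.
have [->|ne] := eqVneq y m.+1; first by rewrite bdry_kernel_up divr_ge0.
have [ym|my] := ltnP y m; last by rewrite bdry_kernel_out.
rewrite bdry_kernel_down // ltW // !divr_gt0 ?doob_weight_gt0 //.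
by rewrite mulr_gt0 ?doob_weight_gt0 // jump_rate_gt0 ?subn_gt0.
Qed.

Lemma bdry_kernel_up_gt0 m : 0 < bdry_kernel (R:=R) m m.+1.
Proof. by rewrite bdry_kernel_up divr_gt0 // ltr0n addn3. Qed.

Lemma bdry_kernel_down_gt0 m y : (y < m)%N -> 0 < bdry_kernel (R:=R) m y.
Proof.
move=> ym; rewrite bdry_kernel_down // divr_gt0 ?doob_weight_gt0 //.
by rewrite mulr_gt0 ?doob_weight_gt0 // jump_rate_gt0 ?subn_gt0.
Qed.

Lemma bdry_kernel_potential m :
  \sum_(y < m.+2) bdry_kernel m y * potential y = potential m + 1.
Proof.
rewrite !big_ord_recr /= bdry_kernel_up bdry_kernel_out ?mul0r ?addr0 //; last first.
  by rewrite neq_ltn ltnSn.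
have -> : \sum_(y < m) bdry_kernel m (widen_ord (leqnSn m.+1) (widen_ord (leqnSn m) y)) *
            potential (widen_ord (leqnSn m.+1) (widen_ord (leqnSn m) y))
        = 3 / 4 / doob_weight m * jump_moment2 m.
  rewrite /jump_moment2 mulr_sumr; apply: eq_bigr => y _ /=.
  rewrite bdry_kernel_down // /potential.
  have := doob_weight_gt0 y; have := doob_weight_gt0 m => h1 h2.
  field; apply/andP; split; exact: lt0r_neq0.
rewrite jump_moment2E /potential /doob_weight midbinomS -[m.+1]addn1 !natrD.
have := ler0n R m => hm; have := midbinom_gt0 m => hb.
field; repeat (apply/andP; split) => //; try exact: lt0r_neq0; apply/negP => /eqP; lra.
Qed.

Lemma potential_sqr_ge n : n%:R ^+ 3 <= 4 * potential n ^+ 2.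
Proof.
rewrite /potential /doob_weight.
have := midbinom_sqr_le n; have := ler0n R n => hn; have := midbinom_gt0 n => hb.
set b := midbinom n; set x := n%:R => hbs.
have hx : 0 < 2 * x + 1 by lra.
have -> : 4 * (3 / 4 * (x * (x + 1)) / ((2 * x + 1) * b)) ^+ 2
   = (9 / 4 * (x ^+ 2 * (x + 1) ^+ 2)) / ((2 * x + 1) ^+ 2 * b ^+ 2).
  by field; apply/andP; split; apply: lt0r_neq0.
rewrite ler_pdivlMr ?mulr_gt0 ?exprn_gt0 //.
have h1 : (2 * x + 1) ^+ 2 * b ^+ 2 <= 2 * x + 1.
  rewrite (_ : _ * _ = (2 * x + 1) * (b ^+ 2 * (2 * x + 1))); last by ring.
  by rewrite -[X in _ <= X]mulr1 ler_wpM2l // ltW.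
have x3 : 0 <= x ^+ 3 by rewrite exprn_ge0.
apply: (le_trans (y := x ^+ 3 * (2 * x + 1))); first by rewrite ler_wpM2l.
rewrite !expr2 !exprS ?expr0 ?mulr1; nra.
Qed.

End KernelAlgebra.

Section RealBounds.
Variable R : realType.

Lemma sum_inv_pow3half_le n :
  \sum_(j < n) 1 / ((j.+2)%:R * Num.sqrt (j.+2)%:R) <= 2 - 2 / Num.sqrt (n.+1)%:R :> R.
Proof.
elim: n => [|n IH]; first by rewrite big_ord0 sqrtr1 divr1 subrr.
rewrite big_ord_recr /=; apply: le_trans (lerD IH (lexx _)) _.
set s := Num.sqrt (n.+1)%:R; set t := Num.sqrt (n.+2)%:R.
have s0 : 0 < s by rewrite sqrtr_gt0 ltr0n.
have t0 : 0 < t by rewrite sqrtr_gt0 ltr0n.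
have t2 : t ^+ 2 = (n.+2)%:R by rewrite sqr_sqrtr // ler0n.
have ts : t ^+ 2 = s ^+ 2 + 1 by rewrite t2 sqr_sqrtr // -natr1.
have st : s <= t by rewrite -(@ler_pXn2r _ 2) ?nnegrE ?ltW //= ts; lra.
suff : 1 / (t ^+ 2 * t) <= 2 / s - 2 / t by rewrite -t2; lra.
have h1 : (t - s) * (t + s) = 1 by rewrite -subr_sqr ts; ring.
rewrite ler_pdivrMr ?mulr_gt0 ?exprn_gt0 //.
have -> : (2 / s - 2 / t) * (t ^+ 2 * t) = 2 * t ^+ 2 * (t - s) / s.
  by field; apply/andP; split; apply: lt0r_neq0.
rewrite ler_pdivlMr // mul1r; nra.
Qed.

Lemma exp4_le_powR23 k t : (8 ^ t <= k)%N -> 4 ^+ t <= (k%:R : R) `^ (2 / 3).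
Proof.
move=> hk; rewrite -(@ler_pXn2r _ 3) ?nnegrE ?exprn_ge0 ?powR_ge0 //=.
have -> : ((k%:R : R) `^ (2 / 3)) ^+ 3 = k%:R ^+ 2.
  rewrite -powR_mulrn ?powR_ge0 // -powRrM -powR_mulrn ?ler0n //; congr (_ `^ _).
  by rewrite -[2%:R]/(2 : R) -[3%:R]/(3 : R); field.
have -> : (4 : R) ^+ t ^+ 3 = (8 ^+ t) ^+ 2.
  by rewrite -!exprM mulnC [in RHS]mulnC !exprM; congr (_ ^+ t); rewrite -!natrX.
by rewrite (@ler_pXn2r _ 2) ?nnegrE ?exprn_ge0 ?ler0n //= -natrX ler_nat.
Qed.

Lemma ln_ge_log8 k t : (8 ^ t <= k)%N -> t%:R * ln 8 <= ln (k%:R : R).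
Proof.
move=> hk; have k0 : (0 < k)%N by apply: leq_trans hk; rewrite expn_gt0.
by rewrite mulr_natl -lnXn // ler_ln ?posrE ?exprn_gt0 ?ltr0n // -natrX ler_nat.
Qed.

End RealBounds.

Lemma potential_ge_level (R : realType) j m : (4 ^ j * j.+2 <= m)%N ->
  8 ^+ j * (j.+2)%:R * Num.sqrt (j.+2)%:R / 2 <= potential R m.
Proof.
move=> hm; set x := ((j.+2)%:R : R); set s := Num.sqrt x.
have x0 : 0 < x by rewrite ltr0n.
have s2 : s ^+ 2 = x by rewrite sqr_sqrtr // ltW.
have hA3 : (4 ^+ j * x) ^+ 3 <= (m%:R : R) ^+ 3.
  rewrite lerXn2r ?nnegrE ?mulr_ge0 ?exprn_ge0 ?ler0n ?(ltW x0) //.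
  by rewrite /x -natrX -natrM ler_nat.
have := potential_sqr_ge R m => hs.
have s0 : 0 <= s by rewrite sqrtr_ge0.
rewrite -(@ler_pXn2r _ 2) ?nnegrE ?potential_ge0 //=; last first.
  by rewrite divr_ge0 // !mulr_ge0 ?exprn_ge0 // ltW.
have -> : (8 ^+ j * x * s / 2) ^+ 2 = (4 ^+ j * x) ^+ 3 / 4.
  rewrite !exprMn s2 -!exprM mulnC [in RHS]mulnC !exprM.
  by rewrite (_ : (8 : R) ^+ 2 = 4 ^+ 3); [field | rewrite -!natrX].
lra.
Qed.

(* For [8 ^ t <= k < 8 ^ t.+1], the level [4 ^ t.+1 * t.+3 + c] is [O(k^(2/3) ln k)]. *)
Lemma limn_esup_ratio_bounded (R : realType) (u : nat -> nat) c n :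
  (forall j, (n <= j)%N -> forall i, (i <= 8 ^ j)%N -> (u i < 4 ^ j * j.+2 + c)%N) ->
  (limn_esup (fun k => ((u k)%:R / ((k%:R : R) `^ (2 / 3) * ln (k%:R : R)))%:E) < +oo)%E.
Proof.
move=> below; set C : R := (c + 16)%:R / ln 8.
have ln8 : 0 < ln (8 : R) by apply: ln_gt0; lra.
suff hk k : (8 ^ n.+1 <= k)%N -> (u k)%:R / ((k%:R : R) `^ (2 / 3) * ln k%:R) <= C.
  apply: (@le_lt_trans _ _ C%:E); last exact: ltry.
  rewrite limn_esup_lim; apply: lime_le; first exact: is_cvg_esups.
  exists (8 ^ n.+1)%N => // m /= hm; apply/ereal_supP => _ [k /= hk' <-].
  by rewrite lee_fin hk // (leq_trans hm hk').
move=> hk; set t := trunc_log 8 k.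
have k0 : (0 < k)%N by apply: leq_trans hk; rewrite expn_gt0.
have ht1 : (8 ^ t <= k)%N by apply: trunc_logP.
have ht2 : (k < 8 ^ t.+1)%N by apply: trunc_log_ltn.
have ht : (n < t)%N.
  by rewrite -ltnS -(@ltn_exp2l 8) //; apply: leq_ltn_trans hk ht2.
have uk : (u k <= 4 ^ t * t * (c + 16))%N.
  have := below t.+1 (leqW (ltnW ht)) k (ltnW ht2); rewrite expnS.
  have : (1 <= 4 ^ t)%N by rewrite expn_gt0.
  set X := (4 ^ t)%N => X1 ukX.
  have h1 : (X <= X * t)%N by rewrite leq_pmulr //; lia.
  have h2 : (c <= X * t * c)%N by rewrite leq_pmull // muln_gt0; apply/andP; split; lia.
  nia.
have D0 : (0 : R) < 4 ^+ t * (t%:R * ln 8) by rewrite !mulr_gt0 ?exprn_gt0 ?ltr0n //; lia.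
have D1 : (4 : R) ^+ t * (t%:R * ln 8) <= (k%:R : R) `^ (2 / 3) * ln k%:R.
  apply: ler_pM; rewrite ?exprn_ge0 ?mulr_ge0 ?ler0n ?(ltW ln8) //.
  - exact: exp4_le_powR23.
  - exact: ln_ge_log8.
rewrite ler_pdivrMr; last exact: lt_le_trans D0 D1.
apply: le_trans (_ : C * (4 ^+ t * (t%:R * ln 8)) <= _); last first.
  by rewrite ler_wpM2l // divr_ge0 // ltW.
have -> : C * (4 ^+ t * (t%:R * ln 8)) = ((4 ^ t * t * (c + 16))%N)%:R.
  by rewrite /C !natrM natrX natrD; field; exact: lt0r_neq0.
by rewrite ler_nat.
Qed.

Lemma measurable_bounded_forall d (T : measurableType d) (I : set nat)
    (Q : nat -> set T) :
  (forall i, I i -> measurable (Q i)) -> measurable [set w | forall i, I i -> Q i w].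
Proof. exact: bigcap_measurableType. Qed.

Section BoundaryChain.
Variables (R : realType) (d : measure_display) (T : measurableType d).
Variables (P : probability T R) (M : nat -> T -> nat) (m0 : nat).
Hypothesis chainM : is_boundary_chain P M m0.

Local Notation K := (bdry_kernel (R:=R)).

Definition cylinder n (x : nat -> nat) := [set w | forall i, (i <= n)%N -> M i w = x i].

Definition path_weight n (x : nat -> nat) : R :=
  (x 0%N == m0)%:R * \prod_(i < n) K (x i) (x i.+1).

Lemma measurable_M_eq i y : measurable [set w | M i w = y].
Proof. by case: chainM. Qed.

Lemma measurable_M_lt i a : measurable [set w | (M i w < a)%N].
Proof.
rewrite (_ : [set w | _] = \bigcup_(y in [set y | (y < a)%N]) [set w | M i w = y]).
  by apply: bigcup_measurable => y _; apply: measurable_M_eq.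
by apply/seteqP; split => [w ?|w [y /= ? ->//]]; exists (M i w).
Qed.

Lemma measurable_cylinder n x : measurable (cylinder n x).
Proof. by apply: measurable_bounded_forall => i _; apply: measurable_M_eq. Qed.

Lemma P_cylinder n x : P (cylinder n x) = (path_weight n x)%:E.
Proof. by case: chainM => _; apply. Qed.

Lemma path_weight_extend n x y :
  path_weight n.+1 [eta x with n.+1 |-> y] = path_weight n x * K (x n) y.
Proof.
rewrite /path_weight big_ord_recr /= eqxx ifN; last by rewrite neq_ltn ltnSn.
rewrite -mulrA; congr (_ * (_ * _)); apply: eq_bigr => i _ /=.
by rewrite !ifN // ?eqSS neq_ltn ?ltn_ord // ltnS ltnW.
Qed.

Lemma cylinder_extend n x :
  cylinder n x = \bigcup_y cylinder n.+1 [eta x with n.+1 |-> y].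
Proof.
apply/seteqP; split => w /=.
  move=> h; exists (M n.+1 w) => // i /=.
  case: eqP => [-> //|/eqP ne] ilt; apply: h; lia.
case=> y _ h i ilt; have /= := h i (leqW ilt).
by rewrite ifN // neq_ltn ltnS ilt.
Qed.

Lemma cylinder_extend_trivIset n x :
  trivIset setT (fun y => cylinder n.+1 [eta x with n.+1 |-> y]).
Proof.
by move=> y z _ _ [w [/= h1 h2]]; move: (h1 _ (leqnn _)); rewrite h2 //= !eqxx.
Qed.

Lemma path_weight_kernel_sum n x :
  path_weight n x = path_weight n x * \sum_(y < (x n).+2) K (x n) y.
Proof.
have := P_cylinder n x; rewrite cylinder_extend measure_semi_bigcup; first last.
- by rewrite -cylinder_extend; apply: measurable_cylinder.
- exact: cylinder_extend_trivIset.
- by move=> y; apply: measurable_cylinder.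
rewrite (@eq_eseriesr _ _ (fun y => (path_weight n x * K (x n) y)%:E)); last first.
  by move=> y _; rewrite -path_weight_extend -P_cylinder.
suff -> : (\sum_(y <oo) (path_weight n x * K (x n) y)%:E =
           (path_weight n x * \sum_(y < (x n).+2) K (x n) y)%:E)%E by case.
apply: lim_near_cst => //; exists (x n).+2 => // N /= hN.
rewrite sumEFin -mulr_sumr big_mkord (big_ord_widen N (K (x n)) hN).
rewrite [in LHS](bigID (fun y : 'I_N => (y < (x n).+2)%N)) /= [X in _ + X]big1 ?addr0 //.
by move=> y; rewrite -leqNgt => hy; rewrite bdry_kernel_out //; apply/eqP; lia.
Qed.

(* Every state is reached with positive probability (go up from [m0], or jump down
   to it in one step), so the normalisation of the path weights forces the kernel
   to be stochastic. *)
Lemma bdry_kernel_sum1 z : \sum_(y < z.+2) K z y = 1.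
Proof.
have [n [x [<- wpos]]] : exists n x, x n = z /\ path_weight n x != 0.
  have [hz|hz] := leqP m0 z.
    exists (z - m0)%N, (fun i => m0 + i)%N; split; first by lia.
    rewrite /path_weight /= addn0 eqxx mul1r; apply/lt0r_neq0/prodr_gt0 => i _.
    by rewrite addnS; apply: bdry_kernel_up_gt0.
  exists 1%N, (fun i => if i == 0%N then m0 else z); split => //.
  by rewrite /path_weight /= eqxx mul1r big_ord1 lt0r_neq0 // bdry_kernel_down_gt0.
by apply: (mulfI wpos); rewrite -path_weight_kernel_sum mulr1.
Qed.

Lemma bdry_kernel_sum_widen z a (f : nat -> R) : (z < a)%N ->
  \sum_(y < a.+1) K z y * f y = \sum_(y < z.+2) K z y * f y.
Proof.
move=> za; rewrite (big_ord_widen a.+1 (fun y => K z y * f y) (za : z.+2 <= a.+1)%N).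
rewrite [LHS](bigID (fun y : 'I_a.+1 => (y < z.+2)%N)) /= [X in _ + X]big1 ?addr0 //.
by move=> y; rewrite -leqNgt => hy; rewrite bdry_kernel_out ?mul0r //; apply/eqP; lia.
Qed.

Fixpoint stay_below_weight (a N z : nat) : R :=
  if N is N'.+1 then \sum_(y < a) K z y * stay_below_weight a N' y else 1.

(* [1 - stay_below_weight a N z] is the probability of reaching [a] within [N] steps
   from [z]; the bound is optional stopping for the martingale [potential M_n - n]. *)
Lemma stay_below_weight_ge a N z : (z < a)%N ->
  1 - stay_below_weight a N z <= (potential R z + N%:R) / potential R a.
Proof.
move=> za; have ha : 0 < potential R a by apply: potential_gt0; lia.
elim: N z za => [|N IH] z za /=.
  by rewrite subrr addr0 divr_ge0 ?potential_ge0 ?ltW.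
have S1 : \sum_(y < a.+1) K z y = 1.
  transitivity (\sum_(y < a.+1) K z y * 1); first by under [RHS]eq_bigr do rewrite mulr1.
  rewrite (@bdry_kernel_sum_widen z a (fun=> 1)) //.
  by under eq_bigr do rewrite mulr1; apply: bdry_kernel_sum1.
have S2 : \sum_(y < a.+1) K z y * potential R y = potential R z + 1.
  by rewrite bdry_kernel_sum_widen // bdry_kernel_potential.
have -> : (potential R z + N.+1%:R) / potential R a
    = \sum_(y < a.+1) K z y * ((potential R y + N%:R) / potential R a).
  under eq_bigr => y _ do rewrite mulrDl mulrDr mulrA [K z y * (N%:R / _)]mulrC.
  rewrite big_split /= -mulr_suml -mulr_sumr S1 S2 -natr1.
  by field; exact: lt0r_neq0.
rewrite -[X in X - _]S1 big_ord_recr /= addrAC -sumrB big_ord_recr /= lerD //.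
  apply: ler_sum => y _; rewrite -[X in X - _]mulr1 -mulrBr.
  by rewrite ler_wpM2l ?bdry_kernel_ge0 ?IH.
by rewrite -[X in X <= _]mulr1 ler_wpM2l ?bdry_kernel_ge0 // ler_pdivlMr // mul1r lerDl.
Qed.

Definition stay_below a N := [set w | forall i, (i <= N)%N -> (M i w < a)%N].

Definition cylinder_stay_below a n x N :=
  cylinder n x `&` [set w | forall i, (n < i <= n + N)%N -> (M i w < a)%N].

Lemma measurable_stay_below a N : measurable (stay_below a N).
Proof. by apply: measurable_bounded_forall => i _; apply: measurable_M_lt. Qed.

Lemma measurable_cylinder_stay_below a n x N :
  measurable (cylinder_stay_below a n x N).
Proof.
apply: measurableI; first exact: measurable_cylinder.
by apply: measurable_bounded_forall => i _; apply: measurable_M_lt.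
Qed.

Lemma cylinder_stay_belowS a n x N :
  cylinder_stay_below a n x N.+1 =
  \big[setU/set0]_(y < a) cylinder_stay_below a n.+1 [eta x with n.+1 |-> val y] N.
Proof.
rewrite -(bigcup_mkord a (fun y => cylinder_stay_below a n.+1 [eta x with n.+1 |-> y] N)).
apply/seteqP; split => w /=.
  move=> [h1 h2]; exists (M n.+1 w); first by apply: h2; lia.
  split => i hi /=; last by apply: h2; lia.
  by case: eqP => [-> //|ne]; apply: h1; lia.
case=> y /= ya [h1 h2]; split => i hi.
  by have /= := h1 i (leqW hi); rewrite ifN //; apply/eqP; lia.
have [->|ne] := eqVneq i n.+1; last by apply: h2; lia.
by have /= := h1 n.+1 (leqnn _); rewrite eqxx => ->.
Qed.

Lemma P_cylinder_stay_below a N n x :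
  P (cylinder_stay_below a n x N) = (path_weight n x * stay_below_weight a N (x n))%:E.
Proof.
elim: N n x => [|N IH] n x.
  rewrite /= mulr1 -P_cylinder; congr (P _); apply/seteqP; split => w /=; first by case.
  by move=> h; split => // i; lia.
rewrite cylinder_stay_belowS measure_bigsetU_ord //; last first.
- move=> y z _ _ [w [/= [h1 _] [h2 _]]]; apply: val_inj.
  by move: (h1 _ (leqnn _)); rewrite h2 //= !eqxx.
- by move=> y; apply: measurable_cylinder_stay_below.
transitivity (\sum_(y < a) (path_weight n x * K (x n) y * stay_below_weight a N y)%:E)%E.
  by apply: eq_bigr => y _; rewrite /= IH /= eqxx path_weight_extend.
by rewrite sumEFin mulr_sumr; congr (_%:E); apply: eq_bigr => y _; rewrite mulrA.
Qed.

Lemma P_not_stay_below a N : (m0 < a)%N ->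
  (P (~` stay_below a N) <= ((potential R m0 + N%:R) / potential R a)%:E)%E.
Proof.
move=> m0a; rewrite probability_setC; last exact: measurable_stay_below.
have : (P (cylinder_stay_below a 0 (fun=> m0) N) <= P (stay_below a N))%E.
  apply: le_measure; rewrite ?inE;
    [exact: measurable_cylinder_stay_below | exact: measurable_stay_below |].
  by move=> w [h1 h2] [|i] hi; [rewrite h1 | apply: h2; lia].
rewrite P_cylinder_stay_below /path_weight eqxx big_ord0 !mul1r.
have := @stay_below_weight_ge a N m0 m0a.
case: (P (stay_below a N)) => [r| |] //= hb h; last by rewrite leNye.
by rewrite -EFinD lee_fin; move: h; rewrite lee_fin; lra.
Qed.

Definition escape_level j := (4 ^ j * j.+2 + m0.+1)%N.
Definition escape j := ~` stay_below (escape_level j) (8 ^ j).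

Lemma measurable_escape j : measurable (escape j).
Proof. exact/measurableC/measurable_stay_below. Qed.

Lemma P_escape_le j :
  (P (escape j) <= (2 * (potential R m0 + 1) / ((j.+2)%:R * Num.sqrt (j.+2)%:R))%:E)%E.
Proof.
apply: le_trans; first by apply: P_not_stay_below; rewrite /escape_level; lia.
rewrite lee_fin.
have hL := @potential_ge_level R j (escape_level j) (leq_addr _ _).
have ha : 0 < potential R (escape_level j).
  by apply: potential_gt0; rewrite /escape_level addnS.
have h0 := potential_ge0 R m0.
set h := potential R (escape_level j) in hL ha *; set hm := potential R m0 in h0 *.
set x := ((j.+2)%:R : R) in hL *; set s := Num.sqrt x in hL *.
have x0 : 0 < x by rewrite ltr0n.
have s0 : 0 < s by rewrite sqrtr_gt0.
have E1 : (1 : R) <= 8 ^+ j by rewrite exprn_ege1 //; lra.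
set E := (8 : R) ^+ j in hL E1 *; rewrite natrX -/E.
rewrite ler_pdivrMr //.
have c0 : 0 <= 2 * (hm + 1) / (x * s) by rewrite divr_ge0 ?mulr_ge0 ?ltW //; lra.
apply: le_trans (ler_wpM2l c0 hL).
rewrite (_ : 2 * (hm + 1) / (x * s) * (E * x * s / 2) = (hm + 1) * E); last first.
  by field; rewrite lt0r_neq0 //= (_ : 2 + j%:R = x) ?lt0r_neq0 // /x -addn2 natrD addrC.
nra.
Qed.

Lemma P_escape_summable : (\sum_(j <oo) P (escape j) < +oo)%E.
Proof.
have h0 := potential_ge0 R m0.
apply: (@le_lt_trans _ _ ((2 * (potential R m0 + 1) * 2)%:E)); last exact: ltry.
apply: lime_le; first by apply: is_cvg_nneseries => *; exact: measure_ge0.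
apply: nearW => n /=; apply: le_trans; first by apply: lee_sum => j _; exact: P_escape_le.
rewrite sumEFin lee_fin big_mkord.
under eq_bigr do rewrite -[_ / _]mulr1 -mulrA [_^-1 * 1]mulrC.
rewrite -mulr_sumr ler_wpM2l ?mulr_ge0 ?addr_ge0 //.
apply: le_trans (sum_inv_pow3half_le R n) _.
by rewrite gerBl divr_ge0 ?sqrtr_ge0.
Qed.

End BoundaryChain.

Local Open Scope ereal_scope.

Theorem theorem3p2 (R : realType) (d : measure_display) (T : measurableType d)
    (P : probability T R) (M : nat -> T -> nat) (m0 : nat) :
  is_boundary_chain P M m0 ->
  {ae P, forall w, limn_esup (bdry_ratio (R:=R) M w) < +oo}.
Proof.
move=> chainM; have mesc := measurable_escape _ _ _ _ _ _ chainM.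
exists (lim_sup_set (escape _ _ M m0)); split.
- by apply: bigcap_measurableType => n _; apply: bigcup_measurable => j _.
- exact: lim_sup_set_cvg0 mesc (P_escape_summable _ _ _ _ _ _ chainM).
move=> w /= unbounded n _; apply: contrapT => escapes_before_n; apply: unbounded.
apply: (@limn_esup_ratio_bounded R (M ^~ w) m0.+1 n) => j jn i ile.
by apply: contrapT => ge; apply: escapes_before_n; exists j => // /(_ i ile).
Qed.
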